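(* For every nonnegative integer $n$, $$E(n,n,n)=\sum_{k=0}^n\binom{n}{k}^3=\sum_{k=\lceil n/2\rceil}^{n}\binom{n}{k}^2\binom{2k}{n} =\frac{1}{2^n}\sum_{k=\lceil n/2\rceil}^{n}\binom{2k}{n}\binom{2k}{k}\binom{2n-2k}{n-k}$$ $$=\sum_{k=0}^{n}\binom{n+2k}{3k}\binom{2k}{k}\binom{3k}{k}(-4)^{n-k} =\sum_{k=0}^{\lfloor n/2\rfloor}\binom{n+k}{3k}\binom{2k}{k}\binom{3k}{k}2^{n-2k}.$$
   Context: For nonnegative integers $n_1,\dots,n_S$, $E(n_1,\dots,n_S)$ denotes the number of block derangements: $S$ players hold $n_1,\dots,n_S$ distinct cards respectively; all $N=n_1+\dots+n_S$ cards are redealt so that player $j$ again receives exactly $n_j$ cards (only which cards each player gets matters); $E$ counts the deals in which no player receives any card he originally held. Equivalently, $E(n_1,\dots,n_S)$ is the coefficient of $x_1^{n_1}\cdots x_S^{n_S}$ in $\prod_{j=1}^S(x_1+\dots+x_S-x_j)^{n_j}$. By convention $E(0,\dots,0)=1$. *)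

From HB Require Import structures.
From mathcomp Require Import all_boot all_order all_algebra.
Set Implicit Arguments. Unset Strict Implicit. Unset Printing Implicit Defensive.

(* Cards: player j holds the cards (j, 0), ..., (j, ns j - 1). *)
Definition card_t (S : nat) (ns : 'I_S -> nat) : finType :=
  {j : 'I_S & 'I_(ns j)}.

Definition block_derangement (S : nat) (ns : 'I_S -> nat)
    (f : {ffun card_t ns -> 'I_S}) : bool :=
  [forall j : 'I_S, #|[set c : card_t ns | f c == j]| == ns j] &&
  [forall c : card_t ns, f c != tag c].

Definition E (S : nat) (ns : 'I_S -> nat) : nat :=
  #|[set f : {ffun card_t ns -> 'I_S} | block_derangement f]|.

Definition E3 (n : nat) : nat := E (fun _ : 'I_3 => n).

(* With three players, a card held by player i must go
   to player i+1 or player i-1 (mod 3), so a deal avoiding the original owners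
   is the same as a family (A_0, A_1, A_2) of subsets of {0..n-1}, A_i being
   the cards player i passes "forward".  Player j then receives
   |A_(j-1)| + (n - |A_(j+1)|) cards, so the deal is balanced exactly when the
   three sets have equal size; counting such families by their common size k
   gives E(n,n,n) = sum_k C(n,k)^3 (the Franel numbers).

   All five sums satisfy Franel's recurrence
     (n+2)^2 u(n+2) = (7n^2+21n+16) u(n+1) + 8(n+1)^2 u(n),
   proved by creative telescoping: for each summand F(n,k) we give an explicit
   certificate G(n,k) with a0 F(n,k) + a1 F(n+1,k) + a2 F(n+2,k) =
   G(n,k+1) - G(n,k), checked by the field tactic after expressing every
   binomial through one reference binomial via the ratio lemmas below.  A
   second-order recurrence with nonvanishing leading coefficient determines a
   sequence from u(0) = 1 and u(1) = 2, so all the sums coincide. *)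

From HB Require Import structures.
From mathcomp Require Import all_boot all_order all_algebra.
From mathcomp Require Import ring lra zify.
Import GRing.Theory Num.Theory.
Set Implicit Arguments. Unset Strict Implicit. Unset Printing Implicit Defensive.

Section EqualSizeFamilies.
Variables (T : finType) (m : nat).

Definition equal_sizes (A : {ffun 'I_m.+1 -> {set T}}) : bool :=
  [forall i, #|A i| == #|A ord0|].

(* Exactly one k can be the common size, so the indicator of [equal_sizes A]
   is the sum over k of the indicators that every set has size k. *)
Lemma equal_sizes_indicator (A : {ffun 'I_m.+1 -> {set T}}) :
  (equal_sizes A : nat) = \sum_(k < #|T|.+1) \prod_i (#|A i| == k : nat).
Proof.
have size0_lt : #|A ord0| < #|T|.+1 by rewrite ltnS max_card.
rewrite [\sum_(k < _) _](bigD1 (Ordinal size0_lt)) //=.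
rewrite [X in _ + X]big1 ?addn0 => [|k k_neq]; last first.
  rewrite (bigD1 ord0) //=.
  suff -> : (#|A ord0| == k) = false by [].
  by apply: contraNF k_neq => /eqP size0_k; apply/eqP/val_inj.
case: (boolP (equal_sizes A)) => [/forallP eqA | ].
  by rewrite big1 // => i _; rewrite eqA.
case/forallPn => i neq_i.
by rewrite (bigD1 i) //= (negbTE neq_i).
Qed.

(* Summing the indicator and exchanging sums, the sum over families of a
   product factors into a product of sums, each counting the k-subsets. *)
Lemma card_equal_sizes :
  #|[set A | equal_sizes A]| = \sum_(k < #|T|.+1) 'C(#|T|, k) ^ m.+1.
Proof.
rewrite -sum1dep_card big_mkcond /=.
rewrite (eq_bigr (fun A : {ffun 'I_m.+1 -> {set T}} =>
  \sum_(k < #|T|.+1) \prod_i (#|A i| == k : nat))) => [|A _]; last first.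
  by rewrite -equal_sizes_indicator; case: equal_sizes.
rewrite exchange_big /=; apply: eq_bigr => k _.
rewrite -(bigA_distr_bigA (fun (_ : 'I_m.+1) (B : {set T}) => (#|B| == k : nat))) /=.
rewrite prod_nat_const card_ord; congr (_ ^ _).
by rewrite -card_draws -sum1dep_card [RHS]big_mkcond; apply: eq_bigr => B _; case: eqP.
Qed.
End EqualSizeFamilies.

Lemma ordS_neq (i : 'I_3) : ordS i != i.
Proof. by case: i => [[|[|[|]]]]. Qed.
Lemma ord_pred_neq (i : 'I_3) : ord_pred i != i.
Proof. by case: i => [[|[|[|]]]]. Qed.
Lemma ordS_neq_pred (i : 'I_3) : ordS i != ord_pred i.
Proof. by case: i => [[|[|[|]]]]. Qed.
Lemma I3_third (i j : 'I_3) : j != i -> j != ordS i -> j = ord_pred i.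
Proof.
by case: i j => [[|[|[|//]]] ?] [[|[|[|//]]] ?] //= _ _; apply: val_inj.
Qed.
Lemma ordSS (i : 'I_3) : ordS (ordS i) = ord_pred i.
Proof. by apply: val_inj; case: i => [[|[|[|]]]]. Qed.
Lemma I3_cases (i : 'I_3) : [\/ i = ord0, i = ordS ord0 | i = ord_pred ord0].
Proof.
by case: i => [[|[|[|//]]] ?]; [apply: Or31 | apply: Or32 | apply: Or33]; apply: val_inj.
Qed.

Lemma card_sigma_set (I : finType) (J : I -> finType)
    (P : forall i, pred (J i)) :
  #|[set p : {i : I & J i} | P (tag p) (tagged p)]| = \sum_i #|[set x | P i x]|.
Proof.
rewrite -sum1dep_card.
rewrite (eq_bigr (fun i => \sum_(x | P i x) 1)) => [|i _]; last by rewrite sum1dep_card.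
by rewrite (@sig_big_dep _ _ _ I J xpredT P (fun _ _ => 1)).
Qed.

Section ThreePlayerDeals.
Variable n : nat.

Local Notation card3 := (card_t (fun _ : 'I_3 => n)).
Local Notation deal := {ffun card3 -> 'I_3}.

Definition deal_of (A : {ffun 'I_3 -> {set 'I_n}}) : deal :=
  [ffun c => if tagged c \in A (tag c) then ordS (tag c) else ord_pred (tag c)].

Definition passed_on (f : deal) : {ffun 'I_3 -> {set 'I_n}} :=
  [ffun i => [set x | f (@Tagged 'I_3 i (fun=> 'I_n) x) == ordS i]].

Lemma card_dest (B : {set 'I_n}) (i j : 'I_3) :
  #|[set x | (if x \in B then ordS i else ord_pred i) == j]| =
  ((if ordS i == j then #|B| else 0) + (if ord_pred i == j then n - #|B| else 0))%N.
Proof.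
have predS := ordS_neq_pred i; rewrite eq_sym in predS.
have [<-|neqS] := eqVneq (ordS i) j.
  rewrite (negbTE predS) addn0; apply: eq_card => x.
  by rewrite inE; case: (x \in B); rewrite ?eqxx ?(negbTE predS).
have [<-|neqP] := eqVneq (ord_pred i) j.
  have -> : n - #|B| = #|~: B| by rewrite -[n in n - _]card_ord -(cardsC B) addKn.
  rewrite add0n; apply: eq_card => x.
  by rewrite !inE; case: (x \in B); rewrite ?eqxx ?(negbTE (ordS_neq_pred i)).
apply/eqP; rewrite cards_eq0; apply/eqP/setP => x.
by rewrite !inE; case: (x \in B); apply/negbTE.
Qed.

Lemma card_received (A : {ffun 'I_3 -> {set 'I_n}}) (j : 'I_3) :
  #|[set c | deal_of A c == j]| = (#|A (ord_pred j)| + (n - #|A (ordS j)|))%N.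
Proof.
pose dest i (x : 'I_n) := (if x \in A i then ordS i else ord_pred i) == j.
rewrite (eq_card (B := [set c : card3 | dest (tag c) (tagged c)])); last first.
  by move=> c; rewrite !inE ffunE.
rewrite (@card_sigma_set _ (fun=> 'I_n) dest) (eq_bigr _ (fun i _ => card_dest (A i) i j)).
rewrite big_split /= -(big_mkcond (fun i => ordS i == j)).
rewrite -(big_mkcond (fun i => ord_pred i == j)).
rewrite (eq_bigl _ _ (fun i => can2_eq (@ordSK 3) (@ord_predK 3) i j)).
rewrite (eq_bigl _ _ (fun i => can2_eq (@ord_predK 3) (@ordSK 3) i j)).
by rewrite !big_pred1_eq.
Qed.

(* [deal_of A] never returns a card to its owner, and it gives every player n
   cards iff |A_(j-1)| = |A_(j+1)| for all j, i.e. iff all sizes agree. *)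
Lemma deal_of_derangement (A : {ffun 'I_3 -> {set 'I_n}}) :
  block_derangement (deal_of A) = equal_sizes A.
Proof.
rewrite /block_derangement.
have -> : [forall c, deal_of A c != tag c].
  apply/forallP => c; rewrite ffunE.
  by case: ifP => _; [exact: ordS_neq | exact: ord_pred_neq].
rewrite andbT.
have size_le i : #|A i| <= n by have := max_card (A i); rewrite card_ord.
apply/forallP/forallP => [received | eqA] j; last first.
  by rewrite card_received (eqP (eqA _)) -(eqP (eqA (ordS j))) subnKC.
have cyc i : #|A (ord_pred i)| = #|A (ordS i)|.
  by have := size_le (ordS i); move: (received i); rewrite card_received => /eqP; lia.
have stepS i : #|A (ordS i)| = #|A i|.
  by rewrite -cyc -[in RHS](ordSK i) (cyc (ordS i)) ordSS.
by apply/eqP; case: (I3_cases j) => ->; rewrite -?ordSS ?stepS.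
Qed.

(* Since i+1 <> i-1, the deal determines the passed-forward sets. *)
Lemma deal_of_inj : injective deal_of.
Proof.
move=> A B eqAB; apply/ffunP => i; apply/setP => x.
have := congr1 (fun f : deal => f (@Tagged 'I_3 i (fun=> 'I_n) x)) eqAB.
rewrite !ffunE /=; have := ordS_neq_pred i.
by case: (x \in A i); case: (x \in B i) => // + eqSP; rewrite eqSP ?eqxx.
Qed.

(* A deal sending no card back comes from its passed-forward sets, since a
   card not sent to i+1 (nor to i) must go to i-1. *)
Lemma deal_of_passed_on (f : deal) :
  [forall c, f c != tag c] -> deal_of (passed_on f) = f.
Proof.
move=> /forallP notback; apply/ffunP => -[i x]; rewrite !ffunE inE /=.
case: eqP => [-> // | neqS]; symmetry.
by apply: I3_third; [exact: (notback (@Tagged 'I_3 i (fun=> 'I_n) x)) | apply/eqP].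
Qed.

Lemma E3_equal_sizes :
  E3 n = #|[set A : {ffun 'I_3 -> {set 'I_n}} | equal_sizes A]|.
Proof.
rewrite /E3 /E -(card_imset _ deal_of_inj); apply: eq_card => f.
rewrite inE; apply/idP/imsetP => [bd | [A]].
  have notback : [forall c, f c != tag c] by case/andP: bd.
  exists (passed_on f); last by rewrite deal_of_passed_on.
  by rewrite inE -deal_of_derangement deal_of_passed_on.
by rewrite inE => eqA ->; rewrite deal_of_derangement.
Qed.

Lemma E3_sum_cubes : E3 n = \sum_(0 <= k < n.+1) 'C(n, k) ^ 3.
Proof. by rewrite E3_equal_sizes card_equal_sizes card_ord big_mkord. Qed.
End ThreePlayerDeals.

Local Open Scope ring_scope.

(* Ratios of neighbouring binomial coefficients, read in a field of
   characteristic zero; they let [field] compare shifted hypergeometric terms. *)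
Lemma binS_ratio {R : numFieldType} (N K : nat) :
  'C(N, K.+1)%:R = 'C(N, K)%:R * (N%:R - K%:R) / K.+1%:R :> R.
Proof.
apply: (@mulIf _ K.+1%:R); first by rewrite pnatr_eq0.
rewrite mulfVK ?pnatr_eq0 // mulrC -natrM mul_bin_left.
have [le_KN | lt_NK] := leqP K N; first by rewrite natrM natrB // mulrC.
by rewrite bin_small // !muln0 mul0r.
Qed.

Lemma bin_down_ratio {R : numFieldType} (N K : nat) :
  'C(N, K)%:R = 'C(N.+1, K)%:R * (N.+1%:R - K%:R) / N.+1%:R :> R.
Proof.
apply: (@mulIf _ N.+1%:R); first by rewrite pnatr_eq0.
rewrite mulfVK ?pnatr_eq0 // mulrC -natrM mul_bin_down.
have [le_KN | lt_NK] := leqP K N.+1; first by rewrite natrM natrB // mulrC.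
by rewrite bin_small // ?muln0 ?mul0n ?mulr0 ?mul0r.
Qed.

Lemma bin_diag_ratio {R : numFieldType} (N K : nat) :
  'C(N, K)%:R = 'C(N.+1, K.+1)%:R * K.+1%:R / N.+1%:R :> R.
Proof.
apply: (@mulIf _ N.+1%:R); first by rewrite pnatr_eq0.
by rewrite mulfVK ?pnatr_eq0 // -!natrM mulnC mul_bin_diag mulnC.
Qed.

Section SecondOrderRecurrence.
Variables (R : idomainType) (a0 a1 a2 : nat -> R).

Definition solves_rec (u : nat -> R) : Prop :=
  forall n, a0 n * u n + a1 n * u n.+1 + a2 n * u n.+2 = 0.

Lemma rec_solution_unique (u v : nat -> R) :
  (forall n, a2 n != 0) -> u 0 = v 0 -> u 1 = v 1 ->
  solves_rec u -> solves_rec v -> u =1 v.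
Proof.
move=> a2_neq0 eq0 eq1 rec_u rec_v n.
suff [] : u n = v n /\ u n.+1 = v n.+1 by [].
elim: n => [|n [eq_n eq_n1]]; split=> //.
apply: (mulfI (a2_neq0 n)); apply: (@addrI _ (a0 n * v n + a1 n * v n.+1)).
by rewrite (rec_v n) -eq_n -eq_n1 (rec_u n).
Qed.

Definition diag_sum (F : nat -> nat -> R) (n : nat) : R :=
  \sum_(0 <= k < n.+1) F n k.

Definition telescopes_at (F G : nat -> nat -> R) (n k : nat) : Prop :=
  a0 n * F n k + a1 n * F n.+1 k + a2 n * F n.+2 k = G n k.+1 - G n k.

(* Zeilberger's method: if F(n,k) vanishes for k > n and the certificate
   vanishes at k = 0 and k = n+3, summing the telescoping identity over
   k <= n+2 shows that diag_sum F solves the recurrence. *)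
Lemma creative_telescoping (F G : nat -> nat -> R) :
  (forall n k, (n < k)%N -> F n k = 0) ->
  (forall n k, telescopes_at F G n k) ->
  (forall n, G n 0 = 0) -> (forall n, G n n.+3 = 0) ->
  solves_rec (diag_sum F).
Proof.
move=> F_vanish telescopes G_0 G_top n.
have widen j : (j < n.+3)%N -> diag_sum F j = \sum_(0 <= k < n.+3) F j k.
  move=> lt_j; rewrite /diag_sum [RHS](big_cat_nat (n := j.+1)) //=.
  rewrite [X in _ = _ + X]big1_seq ?addr0 // => k /andP[_].
  by rewrite mem_index_iota => /andP[lt_jk _]; apply: F_vanish.
rewrite !widen; try lia.
rewrite !mulr_sumr -!big_split /=.
rewrite (telescope_sumr_eq (G n)) ?G_0 ?G_top ?subr0 // => k _.
exact: telescopes.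
Qed.

End SecondOrderRecurrence.

Definition franel_a0 (n : nat) : rat := -8 * n.+1%:R ^+ 2.
Definition franel_a1 (n : nat) : rat := - (7 * n%:R ^+ 2 + 21 * n%:R + 16).
Definition franel_a2 (n : nat) : rat := n.+2%:R ^+ 2.

Notation franel_rec := (solves_rec franel_a0 franel_a1 franel_a2).

(* [field] leaves a conjunction of nonvanishing conditions on the denominators;
   each is a hypothesis or follows from the nonnegativity of n%:R and k%:R. *)
Ltac nonzero_factors :=
  repeat (apply/andP; split); first [assumption | apply/negP; move/eqP; lra].

Definition cube_term (n k : nat) : rat := ('C(n, k) ^ 3)%:R.

Definition cube_cert (n k : nat) : rat :=
  let N := n%:R in let K := k%:R in
  K ^+ 3 * ('C(n.+2, k) ^ 3)%:R / (n.+1%:R ^+ 3 * n.+2%:R ^+ 3) *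
  (-72 + 78*K - 30*K^+2 + 4*K^+3 + N*(-272 + 249*K - 78*K^+2 + 8*K^+3)
   + N^+2*(-402 + 291*K - 66*K^+2 + 4*K^+3) + N^+3*(-290+147*K-18*K^+2)
   + N^+4*(-102+27*K) - 14*N^+5).

Lemma cube_rec : franel_rec (diag_sum cube_term).
Proof.
apply: (creative_telescoping (G := cube_cert)).
- by move=> n k lt_nk; rewrite /cube_term bin_small.
- move=> n k; rewrite /telescopes_at /cube_term /cube_cert.
  rewrite /franel_a0 /franel_a1 /franel_a2 !natrX.
  rewrite (bin_down_ratio n k) (bin_down_ratio n.+1 k) (binS_ratio n.+2 k).
  have n_ge0 : (0 : rat) <= n%:R := ler0n _ _.
  have k_ge0 : (0 : rat) <= k%:R := ler0n _ _.
  field; nonzero_factors.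
- by move=> n; rewrite /cube_cert expr0n /= !mul0r.
- by move=> n; rewrite /cube_cert bin_small // !mulr0 !mul0r.
Qed.

Lemma franel_a2_neq0 (n : nat) : franel_a2 n != 0.
Proof. by rewrite /franel_a2 expf_eq0 pnatr_eq0. Qed.

Lemma franel_sum_unique (F : nat -> nat -> rat) :
  franel_rec (diag_sum F) -> diag_sum F 0 = 1 -> diag_sum F 1 = 2 ->
  diag_sum F =1 diag_sum cube_term.
Proof.
move=> rec_F F_0 F_1; apply: rec_solution_unique franel_a2_neq0 _ _ rec_F cube_rec.
- by rewrite F_0 /diag_sum big_nat1.
- by rewrite F_1 /diag_sum /cube_term !big_nat_recr //= big_nil.
Qed.

Definition sqbin_term (n k : nat) : rat := ('C(n, k) ^ 2 * 'C(k.*2, n))%:R.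

Definition sqbin_cert (n k : nat) : rat :=
  let N := n%:R in let K := k%:R in
  K ^+ 2 * ('C(n.+2, k) ^ 2 * 'C(k.*2, n))%:R / (n.+1%:R ^+ 2 * n.+2%:R ^+ 2) *
  (12*K - 28*K^+2 + 8*K^+3 + N*(-6 + 44*K - 48*K^+2 + 8*K^+3)
   + N^+2*(-15 + 46*K - 20*K^+2) + N^+3*(-12+14*K) - 3*N^+4).

Lemma sqbin_rec : franel_rec (diag_sum sqbin_term).
Proof.
apply: (creative_telescoping (G := sqbin_cert)).
- by move=> n k lt_nk; rewrite /sqbin_term bin_small // expr0n /= mul0n.
- move=> n k; rewrite /telescopes_at /sqbin_term /sqbin_cert.
  rewrite /franel_a0 /franel_a1 /franel_a2.
  rewrite !natrM doubleS (bin_down_ratio n k) (bin_down_ratio n.+1 k).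
  rewrite (binS_ratio n.+2 k) (binS_ratio k.*2 n.+1) (binS_ratio k.*2 n).
  rewrite (bin_down_ratio k.*2 n) (bin_down_ratio k.*2.+1 n) -!mul2n.
  have n_ge0 : (0 : rat) <= n%:R := ler0n _ _.
  have k_ge0 : (0 : rat) <= k%:R := ler0n _ _.
  field; nonzero_factors.
- by move=> n; rewrite /sqbin_cert expr0n /= !mul0r.
- by move=> n; rewrite /sqbin_cert bin_small // !mul0n !mulr0 !mul0r.
Qed.

Lemma sqbin_init : diag_sum sqbin_term 0 = 1 /\ diag_sum sqbin_term 1 = 2.
Proof. by rewrite /diag_sum /sqbin_term !big_nat_recr //= !big_nil. Qed.

(* 2^-n sum_k C(2k,n) C(2k,k) C(2n-2k,n-k); the guard makes the summand
   vanish for k > n, where the truncated difference n - k would be wrong. *)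
Definition central_term (n k : nat) : rat :=
  if (k <= n)%N then
    ('C(k.*2, n) * 'C(k.*2, k) * 'C((n - k).*2, n - k))%:R / 2%:R ^+ n
  else 0.

Definition central_cert (n k : nat) : rat :=
  let N := n%:R in let K := k%:R in
  (-28 + 24*K - 4*K^+2 + N*(-48 + 26*K - 2*K^+2) + N^+2*(-27 + 7*K) - 5*N^+3)
  * central_term n.+2 k / ((n.*2).+3%:R - (k.*2)%:R).

Notation central_telescopes := (telescopes_at franel_a0 franel_a1 franel_a2
  central_term central_cert).

(* The telescoping identity splits into the generic range k <= n and the
   two boundary columns k = n+1, n+2 (beyond them everything vanishes). *)
Lemma central_telescopes_inner (k p : nat) : central_telescopes (k + p) k.
Proof.
rewrite /telescopes_at /central_cert /central_term /franel_a0 /franel_a1 /franel_a2.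
rewrite !ifT; try lia.
have -> : (k + p - k = p)%N by lia.
have -> : ((k + p).+1 - k = p.+1)%N by lia.
have -> : ((k + p).+2 - k = p.+2)%N by lia.
have -> : ((k + p).+2 - k.+1 = p.+1)%N by lia.
rewrite !natrM !doubleS.
set A := k.*2; set B := (k + p)%N.
rewrite (bin_diag_ratio A B) (bin_diag_ratio A B.+1) (bin_down_ratio A B.+2).
rewrite (bin_diag_ratio A.+1 B.+1) (bin_down_ratio A.+1 B.+2).
rewrite (bin_diag_ratio A k) (bin_down_ratio A.+1 k.+1).
rewrite (bin_diag_ratio p.*2 p) (bin_down_ratio p.*2.+1 p.+1).
rewrite (bin_diag_ratio p.*2.+2 p.+1) (bin_down_ratio p.*2.+3 p.+2) !exprS.
have pow_neq0 : 2%:R ^+ B != 0 :> rat by rewrite expf_neq0 // pnatr_eq0.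
have k_ge0 : (0 : rat) <= k%:R := ler0n _ _.
have p_ge0 : (0 : rat) <= p%:R := ler0n _ _.
rewrite /A /B -!mul2n; field; nonzero_factors.
Qed.

Lemma central_telescopes_edge (n : nat) : central_telescopes n n.+1.
Proof.
rewrite /telescopes_at /central_cert /central_term /franel_a0 /franel_a1 /franel_a2.
rewrite ltnn !ifT; try lia.
rewrite !subnn !subSnn /= bin0 bin1 !natrM !doubleS.
rewrite (binS_ratio n.*2.+2 n.+1) (bin_diag_ratio n.*2.+2 n.+1).
rewrite (bin_down_ratio n.*2.+3 n.+2) !exprS.
have pow_neq0 : 2%:R ^+ n != 0 :> rat by rewrite expf_neq0 // pnatr_eq0.
have n_ge0 : (0 : rat) <= n%:R := ler0n _ _.
rewrite -!mul2n; field; nonzero_factors.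
Qed.

Lemma central_telescopes_top (n : nat) : central_telescopes n n.+2.
Proof.
rewrite /telescopes_at /central_cert /central_term /franel_a0 /franel_a1 /franel_a2.
rewrite ifF; last by lia.
rewrite /= !ltnn !ltnSn !subnn bin0 !natrM !exprS.
have pow_neq0 : 2%:R ^+ n != 0 :> rat by rewrite expf_neq0 // pnatr_eq0.
have n_ge0 : (0 : rat) <= n%:R := ler0n _ _.
rewrite -!mul2n; field; nonzero_factors.
Qed.

Lemma central_rec : franel_rec (diag_sum central_term).
Proof.
apply: (creative_telescoping (G := central_cert)).
- by move=> n k lt_nk; rewrite /central_term ifF //; lia.
- move=> n k; have [le_kn | lt_nk] := leqP k n.
    by rewrite -(subnKC le_kn); apply: central_telescopes_inner.
  case: (ltngtP k n.+2) => [lt_k | gt_k | ->]; last exact: central_telescopes_top.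
    have -> : k = n.+1 by lia.
    exact: central_telescopes_edge.
  rewrite /telescopes_at /central_cert /central_term !ifF; try lia.
  by rewrite !(mulr0, mul0r, subrr, addr0).
- by move=> n; rewrite /central_cert /central_term /= bin0n !mul0n !mul0r !mulr0 !mul0r.
- by move=> n; rewrite /central_cert /central_term ifF ?mulr0 ?mul0r //; lia.
Qed.

Lemma central_init : diag_sum central_term 0 = 1 /\ diag_sum central_term 1 = 2.
Proof. by rewrite /diag_sum /central_term !big_nat_recr //= !big_nil; split; vm_compute. Qed.

(* sum_k C(n+2k,3k) C(2k,k) C(3k,k) (-4)^(n-k), written with (-4)^n (-4)^-k
   to avoid truncated subtraction in the exponent. *)
Definition neg4_term (n k : nat) : rat :=
  ('C(n + k.*2, 3 * k) * 'C(k.*2, k) * 'C(3 * k, k))%:R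
  * (- 4%:R) ^+ n * ((- 4%:R)^-1) ^+ k.

Definition neg4_cert (n k : nat) : rat :=
  - (15 + 9 * n%:R) * k%:R ^+ 3 * neg4_term n.+2 k
  / ((n + k.*2).+1%:R * (n + k.*2).+2%:R).

Lemma neg4_rec : franel_rec (diag_sum neg4_term).
Proof.
apply: (creative_telescoping (G := neg4_cert)).
- by move=> n k lt_nk; rewrite /neg4_term (bin_small (n := n + k.*2)) ?mul0r //; lia.
- move=> n k; rewrite /telescopes_at /neg4_cert /neg4_term.
  rewrite /franel_a0 /franel_a1 /franel_a2.
  rewrite !natrM doubleS !addSn !addnS mulnS add3n.
  set M := n + k.*2; set T := 3 * k.
  rewrite (bin_diag_ratio M T) (bin_diag_ratio M.+1 T) (bin_diag_ratio M.+2 T).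
  rewrite (bin_diag_ratio M.+1 T.+1) (bin_diag_ratio M.+2 T.+1) (bin_diag_ratio M.+3 T.+1).
  rewrite (bin_down_ratio M.+2 T.+2) (bin_down_ratio M.+3 T.+2) (binS_ratio M.+4 T.+2).
  rewrite (bin_diag_ratio k.*2 k) (bin_down_ratio k.*2.+1 k.+1).
  rewrite (bin_diag_ratio T k) (bin_down_ratio T.+1 k.+1) (bin_down_ratio T.+2 k.+1) !exprS.
  have n_ge0 : (0 : rat) <= n%:R := ler0n _ _.
  have k_ge0 : (0 : rat) <= k%:R := ler0n _ _.
  rewrite /M /T -!mul2n; field; nonzero_factors.
- by move=> n; rewrite /neg4_cert expr0n /= !mulr0 !mul0r.
- move=> n; rewrite /neg4_cert /neg4_term (bin_small (n := n.+2 + n.+3.*2)); last by lia.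
  by rewrite !mul0n !mul0r !mulr0 !mul0r.
Qed.

Lemma neg4_init : diag_sum neg4_term 0 = 1 /\ diag_sum neg4_term 1 = 2.
Proof. by rewrite /diag_sum /neg4_term !big_nat_recr //= !big_nil; split; vm_compute. Qed.

(* sum_k C(n+k,3k) C(2k,k) C(3k,k) 2^(n-2k), written with 2^n 4^-k. *)
Definition pow2_term (n k : nat) : rat :=
  ('C(n + k, 3 * k) * 'C(k.*2, k) * 'C(3 * k, k))%:R
  * 2%:R ^+ n * (4%:R^-1) ^+ k.

Definition pow2_cert (n k : nat) : rat :=
  - (24 + 18 * n%:R) * k%:R ^+ 3 * pow2_term n.+2 k
  / ((n + k).+1%:R * (n + k).+2%:R).

Lemma pow2_rec : franel_rec (diag_sum pow2_term).
Proof.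
apply: (creative_telescoping (G := pow2_cert)).
- by move=> n k lt_nk; rewrite /pow2_term (bin_small (n := n + k)) ?mul0r //; lia.
- move=> n k; rewrite /telescopes_at /pow2_cert /pow2_term.
  rewrite /franel_a0 /franel_a1 /franel_a2.
  rewrite !natrM doubleS !addSn !addnS mulnS add3n.
  set M := n + k; set T := 3 * k.
  rewrite (bin_diag_ratio M T) (bin_diag_ratio M.+1 T) (bin_diag_ratio M.+2 T).
  rewrite (bin_down_ratio M.+1 T.+1) (bin_down_ratio M.+2 T.+1).
  rewrite (binS_ratio M.+3 T.+2) (binS_ratio M.+3 T.+1).
  rewrite (bin_diag_ratio k.*2 k) (bin_down_ratio k.*2.+1 k.+1).
  rewrite (bin_diag_ratio T k) (bin_down_ratio T.+1 k.+1) (bin_down_ratio T.+2 k.+1) !exprS.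
  have n_ge0 : (0 : rat) <= n%:R := ler0n _ _.
  have k_ge0 : (0 : rat) <= k%:R := ler0n _ _.
  rewrite /M /T -!mul2n; field; nonzero_factors.
- by move=> n; rewrite /pow2_cert expr0n /= !mulr0 !mul0r.
- move=> n; rewrite /pow2_cert /pow2_term (bin_small (n := n.+2 + n.+3)); last by lia.
  by rewrite !mul0n !mul0r !mulr0 !mul0r.
Qed.

Lemma pow2_init : diag_sum pow2_term 0 = 1 /\ diag_sum pow2_term 1 = 2.
Proof. by rewrite /diag_sum /pow2_term !big_nat_recr //= !big_nil; split; vm_compute. Qed.

Lemma sum_nat_from0 (F : nat -> nat) (a b : nat) :
  (a <= b)%N -> (forall k, (k < a)%N -> F k = 0%N) ->
  (\sum_(a <= k < b) F k = \sum_(0 <= k < b) F k)%N.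
Proof.
move=> le_ab F_0; rewrite [RHS](big_cat_nat (n := a)) //= [X in _ = (X + _)%N]big1_seq //.
by move=> k /andP[_]; rewrite mem_index_iota => /andP[_]; apply: F_0.
Qed.

(* The sums of the statement are the diagonal sums above: terms with
   2k < n vanish (C(2k,n) = 0), and powers are redistributed. *)
Lemma sqbin_sum (n : nat) :
  (\sum_(uphalf n <= k < n.+1) 'C(n, k) ^ 2 * 'C(k.*2, n))%N%:R
  = diag_sum sqbin_term n.
Proof.
rewrite sum_nat_from0 ?natr_sum //; first by rewrite leq_uphalf_double; lia.
by move=> k lt_k; rewrite (bin_small (n := k.*2)) ?muln0 // -gtn_uphalf_double.
Qed.

Lemma central_sum (n : nat) :
  (2%:R ^+ n)^-1 * (\sum_(uphalf n <= k < n.+1)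
      'C(k.*2, n) * 'C(k.*2, k) * 'C(n.*2 - k.*2, n - k))%N%:R
  = diag_sum central_term n.
Proof.
rewrite sum_nat_from0; last first.
- by move=> k lt_k; rewrite (bin_small (n := k.*2)) ?mul0n // -gtn_uphalf_double.
- by rewrite leq_uphalf_double; lia.
rewrite natr_sum mulr_sumr; apply: eq_big_nat => k /andP[_ lt_k].
by rewrite /central_term ifT ?doubleB 1?mulrC //; lia.
Qed.

Lemma neg4_sum (n : nat) :
  \sum_(0 <= k < n.+1)
    ('C(n + k.*2, 3 * k) * 'C(k.*2, k) * 'C(3 * k, k))%N%:R * (- 4%:R) ^+ (n - k)
  = diag_sum neg4_term n.
Proof.
apply: eq_big_nat => k /andP[_ lt_k]; rewrite /neg4_term -mulrA; congr (_ * _).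
rewrite exprVn -{2}(subnK (_ : (k <= n)%N)); last by lia.
by rewrite exprD mulfK // expf_neq0 // oppr_eq0 pnatr_eq0.
Qed.

Lemma pow2_sum (n : nat) :
  (\sum_(0 <= k < n./2.+1)
    'C(n + k, 3 * k) * 'C(k.*2, k) * 'C(3 * k, k) * 2 ^ (n - k.*2))%N%:R
  = diag_sum pow2_term n.
Proof.
rewrite natr_sum /diag_sum (big_cat_nat (n := n./2.+1) (p := n.+1)) //=; last first.
  by rewrite ltnS leq_half_double; lia.
rewrite [X in _ = _ + X]big1_seq ?addr0; last first.
  move=> k /andP[_]; rewrite mem_index_iota ltn_half_double => /andP[lt_k _].
  by rewrite /pow2_term (bin_small (n := n + k)) ?mul0r //; lia.
apply: eq_big_nat => k /andP[_ lt_k].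
have le_2k : (k.*2 <= n)%N by move: lt_k; rewrite ltnS geq_half_double.
rewrite /pow2_term natrM -!mulrA; congr (_ * _).
rewrite natrX -{2}(subnK le_2k) exprD -mul2n exprM -natrX exprVn.
by rewrite mulfK // expf_neq0 // pnatr_eq0.
Qed.

Theorem mainTheorem6 (n : nat) :
  let e : rat := ((E3 n)%:R)%R in
  [/\ e = ((\sum_(0 <= k < n.+1) 'C(n, k) ^ 3)%N%:R)%R,
      e = ((\sum_(uphalf n <= k < n.+1) 'C(n, k) ^ 2 * 'C(k.*2, n))%N%:R)%R,
      e = ((2%:R ^+ n)^-1 *
          (\sum_(uphalf n <= k < n.+1)
              'C(k.*2, n) * 'C(k.*2, k) * 'C(n.*2 - k.*2, n - k))%N%:R)%R,
      e = (\sum_(0 <= k < n.+1)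
            ('C(n + k.*2, 3 * k) * 'C(k.*2, k) * 'C(3 * k, k))%N%:R
              * (- 4%:R) ^+ (n - k))%R
    & e = ((\sum_(0 <= k < n./2.+1)
            'C(n + k, 3 * k) * 'C(k.*2, k) * 'C(3 * k, k) * 2 ^ (n - k.*2))%N%:R)%R].
Proof.
move=> e; have e_cubes : e = diag_sum cube_term n by rewrite /e E3_sum_cubes natr_sum.
have [sqbin0 sqbin1] := sqbin_init; have [central0 central1] := central_init.
have [neg40 neg41] := neg4_init; have [pow20 pow21] := pow2_init.
split; rewrite e_cubes.
- by rewrite natr_sum.
- by rewrite sqbin_sum (franel_sum_unique sqbin_rec sqbin0 sqbin1).
- by rewrite central_sum (franel_sum_unique central_rec central0 central1).
- by rewrite neg4_sum (franel_sum_unique neg4_rec neg40 neg41).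
- by rewrite pow2_sum (franel_sum_unique pow2_rec pow20 pow21).
Qed.
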